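(* Let $i\in\{1,2,3,4\}$ and let $M\in\mathcal{X}_i$. Then either $M$ has a minor isomorphic to some matroid in $\mathcal{N}_i$, or $M\in\mathcal{X}_{i+1}$.
   Context: A partial field is a pair $(R,G)$, $R$ a commutative ring with unity, $G$ a subgroup of its units containing $-1$; a matroid is representable over it if it is isomorphic to $M[A]$ for a matrix $A$ with entries in $G\cup\{0\}$ whose non-zero square subdeterminants all lie in $G$ (for an $X\times Y$ matrix $A$, $M[A]$ is the matroid on $X\cup Y$ with bases $X\triangle Z$ where $|X\cap Z|=|Y\cap Z|$ and $\det A[X\cap Z,Y\cap Z]\neq0$). The Hydra partial fields are: $\mathbb{H}_1=\mathrm{GF}(5)$; $\mathbb{H}_2=(\mathbb{Z}[i,1/2],\langle i,1-i\rangle)$ with $i^2=-1$; $\mathbb{H}_3=(\mathbb{Q}(\alpha),\langle -1,\alpha,1-\alpha,\alpha^2-\alpha+1\rangle)$; $\mathbb{H}_4=(\mathbb{Q}(\alpha,\beta),\langle -1,\alpha,\beta,\alpha-1,\beta-1,\alpha\beta-1,\alpha+\beta-2\alpha\beta\rangle)$; $\mathbb{H}_5=(\mathbb{Q}(\alpha,\beta,\gamma),\langle -1,\alpha,\beta,\gamma,\alpha-1,\beta-1,\gamma-1,\alpha-\gamma,\gamma-\alpha\beta,(1-\gamma)-(1-\alpha)\beta\rangle)$, with $\alpha,\beta,\gamma$ indeterminates and $\langle\cdot\rangle$ denoting the generated multiplicative group. For $i\in\{1,\dots,5\}$, $\mathcal{X}_i$ is the set of excluded minors (matroids not $\mathbb{H}_i$-representable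 all of whose proper minors are) for the class of $\mathbb{H}_i$-representable matroids. For $i\in\{1,2,3,4\}$, $\mathcal{N}_i$ is the set of matroids in $\mathcal{X}_{i+1}$ that are $\mathbb{H}_i$-representable. *)

From HB Require Import structures.
From mathcomp Require Import all_boot all_order all_algebra all_field.
From mathcomp Require Import fraction.
Set Implicit Arguments. Unset Strict Implicit. Unset Printing Implicit Defensive.
Import Order.TTheory GRing.Theory Num.Theory.
Local Open Scope ring_scope.

Record setsys (T : finType) := SetSys { ground : {set T}; bases : {set {set T}} }.

Definition is_matroid (T : finType) (M : setsys T) : Prop :=
  [/\ bases M != set0,
      (forall B, B \in bases M -> B \subset ground M) &
      (forall B1 B2, B1 \in bases M -> B2 \in bases M ->
        forall x, x \in B1 :\: B2 ->
          exists2 y, y \in B2 :\: B1 & (y |: (B1 :\ x)) \in bases M)].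

Definition rank (T : finType) (M : setsys T) (S : {set T}) : nat :=
  (\max_(B in bases M) #|B :&: S|)%N.

(** The minor M / C \ D, on ground set E - (C ∪ D), with rank function
    r'(X) = r(X ∪ C) - r(C); its bases are the X with r'(X) = |X| = r'(E'). *)
Definition minor (T : finType) (M : setsys T) (C D : {set T}) : setsys T :=
  SetSys (ground M :\: (C :|: D))
    [set B : {set T} | [&& B \subset ground M :\: (C :|: D),
                          rank M (B :|: C) == (#|B| + rank M C)%N &
                          rank M (B :|: C) == rank M (ground M :\: D)]].

Definition minor_data (T : finType) (M : setsys T) (C D : {set T}) : Prop :=
  [/\ C \subset ground M, D \subset ground M & [disjoint C & D]].

Definition isomorphic (T1 T2 : finType) (M1 : setsys T1) (M2 : setsys T2) : Prop :=
  exists f : T1 -> T2,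
    [/\ {in ground M1 &, injective f},
        f @: ground M1 = ground M2 &
        forall Z : {set T1}, Z \subset ground M1 ->
          (Z \in bases M1) = (f @: Z \in bases M2)].

Definition has_minor_iso (T1 T2 : finType) (M : setsys T1) (N : setsys T2) : Prop :=
  exists C D : {set T1}, minor_data M C D /\ isomorphic (minor M C D) N.

Record partial_field := PartialField {
  pf_ring : comUnitRingType;
  pf_group : pf_ring -> Prop }.

(** Subdeterminant det A[r, c] (rows/columns in the order of enum; only
    meaningful when #|r| = #|c|; the empty subdeterminant is 1). *)
Definition subdet (R : comUnitRingType) (X Y : finType) (A : X -> Y -> R)
    (r : {set X}) (c : {set Y}) : R :=
  let A' (ox : option X) (oy : option Y) :=
    match ox, oy with Some x, Some y => A x y | _, _ => 0 end in
  let rs := [seq Some x | x <- enum r] in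
  let cs := [seq Some y | y <- enum c] in
  \det (\matrix_(i < #|r|, j < #|r|) A' (nth None rs i) (nth None cs j)).

Definition rows_of (X Y : finType) (Z : {set (X + Y)%type}) : {set X} :=
  [set x | inl x \in Z].
Definition cols_of (X Y : finType) (Z : {set (X + Y)%type}) : {set Y} :=
  [set y | inr y \in Z].

Definition symdiff (T : finType) (A B : {set T}) : {set T} := (A :\: B) :|: (B :\: A).

Definition matroid_of_matrix (R : comUnitRingType) (X Y : finType)
    (A : X -> Y -> R) : setsys (X + Y)%type :=
  SetSys [set: (X + Y)%type]
    [set B : {set (X + Y)%type} | [exists Z : {set (X + Y)%type},
        [&& B == symdiff [set inl x | x : X] Z,
            #|rows_of Z| == #|cols_of Z| &
            subdet A (rows_of Z) (cols_of Z) != 0]]].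

Definition is_pf_matrix (P : partial_field) (X Y : finType)
    (A : X -> Y -> pf_ring P) : Prop :=
  (forall x y, A x y = 0 \/ @pf_group P (A x y)) /\
  (forall (r : {set X}) (c : {set Y}), #|r| = #|c| ->
     subdet A r c != 0 -> @pf_group P (subdet A r c)).

Definition representable (P : partial_field) (T : finType) (M : setsys T) : Prop :=
  exists (X Y : finType) (A : X -> Y -> pf_ring P),
    is_pf_matrix A /\ isomorphic (matroid_of_matrix A) M.

Definition excluded_minor (P : partial_field) (T : finType) (M : setsys T) : Prop :=
  [/\ is_matroid M, ~ representable P M &
      forall C D : {set T}, minor_data M C D -> C :|: D != set0 ->
        representable P (minor M C D)].

Definition gen_group (R : comUnitRingType) (gs : seq R) : R -> Prop :=
  fun x => exists es : seq int, size es = size gs /\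
                 x = \prod_(j < size gs) gs`_j ^ es`_j.

Definition H1 : partial_field := @PartialField 'F_5 (fun x => x != 0).

(** H2 = (Z[i,1/2], <i, 1-i>); realised inside algC. *)
Definition H2 : partial_field :=
  @PartialField algC (gen_group [:: 'i; 1 - 'i]).

Definition Q1 := {fraction {poly rat}}.
Definition Q2 := {fraction {poly {poly rat}}}.
Definition Q3 := {fraction {poly {poly {poly rat}}}}.

Definition a1 : Q1 := tofrac 'X.
Definition a2 : Q2 := tofrac ('X%:P).
Definition b2 : Q2 := tofrac 'X.
Definition a3 : Q3 := tofrac ('X%:P%:P).
Definition b3 : Q3 := tofrac ('X%:P).
Definition c3 : Q3 := tofrac 'X.

Definition H3 : partial_field :=
  @PartialField Q1 (gen_group [:: -1; a1; 1 - a1; a1 ^+ 2 - a1 + 1]).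

Definition H4 : partial_field :=
  @PartialField Q2 (gen_group [:: -1; a2; b2; a2 - 1; b2 - 1; a2 * b2 - 1;
                                  a2 + b2 - 2 * a2 * b2]).

Definition H5 : partial_field :=
  @PartialField Q3 (gen_group [:: -1; a3; b3; c3; a3 - 1; b3 - 1; c3 - 1;
                                  a3 - c3; c3 - a3 * b3;
                                  (1 - c3) - (1 - a3) * b3]).

Definition Hydra (i : nat) : partial_field :=
  match i with
  | 1 => H1 | 2 => H2 | 3 => H3 | 4 => H4 | _ => H5
  end.

(** N_i: matroids in X_{i+1} that are H_i-representable. *)
Definition in_N (i : nat) (T : finType) (N : setsys T) : Prop :=
  excluded_minor (Hydra i.+1) N /\ representable (Hydra i) N.

From mathcomp Require Import all_boot all_algebra all_field fraction.
From mathcomp Require Import perm ring zify.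
From Stdlib Require Import Classical ClassicalEpsilon.
Set Implicit Arguments. Unset Strict Implicit. Unset Printing Implicit Defensive.

(* Each Hydra partial field maps to the previous one by a partial-field
   homomorphism: H2 -> GF(5) sends i to 2, H3 -> H2 sends alpha to i, H4 -> H3
   sends (alpha, beta) to (alpha, alpha / (alpha - 1)), and H5 -> H4 sends
   (alpha, beta, gamma) to (1 / alpha, beta, beta).  Such a homomorphism maps a
   partial-field matrix to one with the same nonvanishing square subdeterminants,
   so every H_{i+1}-representable matroid is H_i-representable.  Hence an
   excluded minor M for H_i is not H_{i+1}-representable.  If all proper minors
   of M are H_{i+1}-representable, M is an excluded minor for H_{i+1}; otherwise
   a minimal non-H_{i+1}-representable proper minor N of M is one, and N is
   H_i-representable because it is a proper minor of M.  Minimality uses that a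
   minor of a minor is a minor, which comes from the submodularity of rank. *)

Section MatroidRank.
Variables (T : finType) (M : setsys T).
Implicit Types (S X Y B : {set T}).

Lemma card_basisI_le_rank B S : B \in bases M -> #|B :&: S| <= rank M S.
Proof. exact: leq_bigmax_cond. Qed.

Lemma rank_le_card S : rank M S <= #|S|.
Proof. by apply/bigmax_leqP => B _; rewrite subset_leq_card ?subsetIr. Qed.

Lemma rank_mono X Y : X \subset Y -> rank M X <= rank M Y.
Proof.
move=> sXY; apply/bigmax_leqP => B HB; apply: leq_trans (card_basisI_le_rank Y HB).
by rewrite subset_leq_card ?setIS.
Qed.

Hypothesis HM : is_matroid M.

Lemma rank_witness S : exists2 B, B \in bases M & rank M S = #|B :&: S|.
Proof.
have [bases_neq0 _ _] := HM.
have := @eq_bigmax_cond _ (mem (bases M)) (fun B => #|B :&: S|).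
by rewrite /rank card_gt0 => /(_ bases_neq0) [B HB ->]; exists B.
Qed.

Lemma basis_subset_eq B1 B2 :
  B1 \in bases M -> B2 \in bases M -> B1 \subset B2 -> B1 = B2.
Proof.
have [_ _ exchange] := HM; move=> HB1 HB2 sB12; apply/eqP; rewrite eqEsubset sB12.
apply/subsetP=> y yB2; apply/negPn/negP=> yB1.
have yB21 : y \in B2 :\: B1 by rewrite inE yB1.
have [z] := exchange B2 B1 HB2 HB1 y yB21.
by rewrite inE => /andP[/negP + /(subsetP sB12)].
Qed.

Lemma card_bases B1 B2 : B1 \in bases M -> B2 \in bases M -> #|B1| = #|B2|.
Proof.
have [_ _ exchange] := HM; move=> + HB2.
elim: {B1}_.+1 {-2}B1 (ltnSn #|B1 :\: B2|) => // n IHn B1 ltB1n HB1.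
have [/eqP|[x xB12]] := set_0Vmem (B1 :\: B2).
  by rewrite setD_eq0 => /(basis_subset_eq HB1 HB2) ->.
have [y yB21 HB1'] := exchange B1 B2 HB1 HB2 x xB12.
move: xB12 yB21; rewrite !inE => /andP[xB2 xB1] /andP[yB1 yB2].
have eD : (y |: (B1 :\ x)) :\: B2 = (B1 :\: B2) :\ x.
  apply/setP=> z; rewrite !inE; have [->|_] := eqVneq z y; first by rewrite yB2 /= andbF.
  by rewrite andbCA.
rewrite -(IHn _ _ HB1') ?cardsU1 ?inE ?(negbTE yB1) ?andbF ?(cardsD1 x B1) ?xB1 //.
by rewrite eD (cardsD1 x (B1 :\: B2)) !inE xB2 xB1 in ltB1n *.
Qed.

Lemma card_basisI_le_subD B1 B2 S : B1 \in bases M -> B2 \in bases M ->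
  B1 :\: B2 \subset S -> #|B2 :&: S| <= #|B1 :&: S|.
Proof.
move=> HB1 HB2 sB12S.
have sD : B1 :\: S \subset B2 :\: S.
  apply/subsetP=> z; rewrite !inE => /andP[zS zB1]; rewrite zS /=.
  by apply: contraR zS => zB2; apply: (subsetP sB12S); rewrite inE zB2.
have := subset_leq_card sD; have := cardsID S B1; have := cardsID S B2.
by rewrite (card_bases HB1 HB2); lia.
Qed.

(* Among the bases realising rank S1, one with the largest intersection with
   a fixed basis B2 realising rank S2 can only leave B2 inside S2. *)
Lemma rank_witness_nested S1 S2 : S1 \subset S2 ->
  exists2 B, B \in bases M & rank M S1 = #|B :&: S1| /\ rank M S2 = #|B :&: S2|.
Proof.
have [_ _ exchange] := HM; move=> sS12.
have [B2 HB2 rS2] := rank_witness S2; have [B1 HB1 rS1] := rank_witness S1.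
pose P B := (B \in bases M) && (#|B :&: S1| == rank M S1).
have PB1 : P B1 by rewrite /P HB1 rS1 eqxx.
case: (arg_maxnP (fun B => #|B :&: B2|) PB1) => B /andP[HB /eqP rS1B] maxB.
exists B => //; split=> //; apply/eqP; rewrite eqn_leq card_basisI_le_rank // rS2 andbT.
apply: card_basisI_le_subD => //; apply/subsetP=> x xB; apply/negPn/negP=> xS2.
have [y yB2 HB'] := exchange B B2 HB HB2 x xB.
move: xB yB2; rewrite !inE => /andP[xB2 xB] /andP[yB yB2].
have xS1 : x \notin S1 by apply: contra xS2; apply: subsetP.
have PB' : P (y |: (B :\ x)).
  rewrite /P HB' eqn_leq card_basisI_le_rank //= -rS1B subset_leq_card //.
  apply/subsetP=> z; rewrite !inE => /andP[zB zS1]; rewrite zB zS1 !andbT.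
  by apply/orP; right; apply: contraNneq xS1 => <-.
have := maxB _ PB'.
have -> : (y |: (B :\ x)) :&: B2 = y |: (B :&: B2).
  apply/setP=> z; rewrite !inE; have [->|_] := eqVneq z y; first by rewrite yB2.
  by have [->|_] := eqVneq z x; first by rewrite (negbTE xB2) !andbF.
by rewrite cardsU1 inE (negbTE yB) /= add1n ltnn.
Qed.

Lemma rank_submod X Y : rank M (X :|: Y) + rank M (X :&: Y) <= rank M X + rank M Y.
Proof.
have [B HB [-> ->]] := rank_witness_nested (subset_trans (subsetIl X Y) (subsetUl X Y)).
rewrite setIUr setIIr cardsUI.
by rewrite leq_add ?card_basisI_le_rank.
Qed.
End MatroidRank.

Section MatroidOfRank.
Variables (T : finType) (rho : {set T} -> nat).
Implicit Types (E I J X Y A B : {set T}).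

Definition matroid_of_rank E : setsys T :=
  SetSys E [set B : {set T} | [&& B \subset E, rho B == #|B| & rho B == rho E]].

Hypothesis rho_le_card : forall X, rho X <= #|X|.
Hypothesis rho_mono : forall X Y, X \subset Y -> rho X <= rho Y.
Hypothesis rho_submod : forall X Y, rho (X :|: Y) + rho (X :&: Y) <= rho X + rho Y.

Lemma rho_indep_sub I J : rho I = #|I| -> J \subset I -> rho J = #|J|.
Proof.
move=> rI /setIidPr eJ; have := rho_submod (I :&: J) (I :\: J).
rewrite setID rI -(cardsID J I) eJ.
by have := rho_le_card J; have := rho_le_card (I :\: J); lia.
Qed.

Lemma rho_setU1 X x : rho (x |: X) <= (rho X).+1.
Proof. by have := rho_submod [set x] X; have := rho_le_card [set x]; rewrite cards1; lia. Qed.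

Lemma rho_setU_eq I A :
  (forall x, x \in A -> rho (x |: I) = rho I) -> rho (I :|: A) = rho I.
Proof.
elim: {A}#|A| {-2}A (erefl #|A|) => [|n IHn] A cA rA.
  by move/eqP: cA; rewrite cards_eq0 => /eqP ->; rewrite setU0.
have [x xA] : exists x, x \in A by apply/set0Pn; rewrite -card_gt0 cA.
have rIA : rho (I :|: A :\ x) = rho I.
  apply: IHn => [|y /setD1P[_ /rA] //].
  by move: cA; rewrite (cardsD1 x A) xA => -[].
have := rho_submod (I :|: A :\ x) (x |: I).
have -> : I :|: A :\ x :|: (x |: I) = I :|: A.
  apply/setP=> z; rewrite !inE; have [->|_] := eqVneq z x; first by rewrite xA !orbT.
  by case: (z \in I); rewrite /= ?orbF.
have := rho_mono (subsetUl I A).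
have := rho_mono (_ : I \subset (I :|: A :\ x) :&: (x |: I)).
rewrite subsetI subsetUl subsetUr => /(_ isT).
by rewrite rIA (rA x xA); lia.
Qed.

Lemma rho_extend I X : rho I = #|I| -> I \subset X ->
  exists J, [/\ I \subset J, J \subset X, rho J = #|J| & rho J = rho X].
Proof.
move=> rI sIX; pose P J := [&& I \subset J, J \subset X & rho J == #|J|].
have [|J /maxsetP[/and3P[sIJ sJX /eqP rJ] maxJ] _] := @maxset_exists _ P I.
  by rewrite /P subxx sIX rI eqxx.
exists J; split=> //; rewrite -[in RHS](setUidPr sJX) rho_setU_eq // => x xX.
apply/anti_leq; rewrite [rho J <= _]rho_mono ?subsetUr // andbT.
have [xJ|xJ] := boolP (x \in J); first by rewrite (setUidPr _) // sub1set.
rewrite leqNgt; apply/negP => ltJ; have := rho_setU1 J x.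
rewrite leq_eqVlt ltnS leqNgt ltJ orbF => /eqP rxJ.
have PxJ : P (x |: J).
  rewrite /P subUset sub1set xX sJX (subset_trans sIJ) ?subsetUr //=.
  by rewrite rxJ cardsU1 xJ rJ.
by move: xJ; rewrite -(maxJ _ PxJ (subsetUr _ _)) setU11.
Qed.

Lemma rho_indep_set0 : rho set0 = #|@set0 T|.
Proof. by apply/eqP; rewrite cards0 -leqn0 -(cards0 T). Qed.

Lemma is_matroid_of_rank E : is_matroid (matroid_of_rank E).
Proof.
split=> /= [|B|B1 B2].
- have [B [_ sBE rB rBE]] := rho_extend rho_indep_set0 (sub0set E).
  by apply/set0Pn; exists B; rewrite inE sBE {1}rB rBE !eqxx.
- by rewrite inE => /andP[].
rewrite !inE => /and3P[sB1 /eqP rB1 /eqP rB1E] /and3P[sB2 /eqP rB2 /eqP rB2E] x.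
case/setDP=> xB1 xB2; set I := B1 :\ x.
have rI : rho I = #|I| := rho_indep_sub rB1 (subD1set B1 x).
have cB1 : #|B1| = #|I|.+1 by rewrite (cardsD1 x B1) xB1.
have [/forall_inP closedI|/forall_inPn[y yB2 ryI]] :=
  boolP [forall y in B2, rho (y |: I) == rho I].
  have := rho_mono (subsetUr I B2); rewrite rho_setU_eq => [|y /closedI/eqP //].
  by rewrite rB2E -rB1E rB1 cB1 rI ltnn.
have yI : y \notin I by apply: contra ryI => yI; rewrite (setUidPr _) // sub1set.
have ryI1 : rho (y |: I) = (rho I).+1.
  by apply/eqP; rewrite eqn_leq rho_setU1 ltn_neqAle eq_sym ryI rho_mono ?subsetUr.
have yB1 : y \notin B1.
  by apply: contraNN yI => yB1; rewrite !inE yB1 andbT; apply: contraNneq xB2 => <-.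
exists y; first by rewrite inE yB1 yB2.
rewrite inE subUset sub1set (subsetP sB2) //= (subset_trans (subD1set B1 x)) //=.
by rewrite ryI1 cardsU1 yI rI -rB1E rB1 cB1 !eqxx.
Qed.

Lemma rank_matroid_of_rank E X : X \subset E -> rank (matroid_of_rank E) X = rho X.
Proof.
move=> sXE; apply/eqP; rewrite eqn_leq; apply/andP; split.
  apply/bigmax_leqP => B; rewrite inE => /and3P[_ /eqP rB _].
  by rewrite -(rho_indep_sub rB (subsetIl B X)) rho_mono ?subsetIr.
have [J [_ sJX rJ <-]] := rho_extend rho_indep_set0 (sub0set X).
have [B [sJB sBE rB rBE]] := rho_extend rJ (subset_trans sJX sXE).
have HB : B \in bases (matroid_of_rank E) by rewrite inE sBE {1}rB rBE !eqxx.
by rewrite rJ (leq_trans _ (card_basisI_le_rank X HB)) // subset_leq_card // subsetI sJB.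
Qed.
End MatroidOfRank.

Lemma eq_matroid_of_rank (T : finType) (rho1 rho2 : {set T} -> nat) (E : {set T}) :
  (forall X : {set T}, X \subset E -> rho1 X = rho2 X) ->
  matroid_of_rank rho1 E = matroid_of_rank rho2 E.
Proof.
move=> e12; congr SetSys; apply/setP=> B; rewrite !inE.
by case sBE: (B \subset E); rewrite //= !e12.
Qed.

Section Contraction.
Variables (T : finType) (M : setsys T).
Hypothesis HM : is_matroid M.
Implicit Types (C D X Y : {set T}).

Definition contract_rank C X := rank M (X :|: C) - rank M C.

Lemma contract_rank_le_card C X : contract_rank C X <= #|X|.
Proof.
rewrite /contract_rank leq_subLR addnC.
by have := rank_submod HM X C; have := rank_le_card M X; lia.
Qed.

Lemma contract_rank_mono C X Y : X \subset Y -> contract_rank C X <= contract_rank C Y.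
Proof. by move=> sXY; rewrite leq_sub2r // rank_mono // setSU. Qed.

Lemma contract_rank_submod C X Y :
  contract_rank C (X :|: Y) + contract_rank C (X :&: Y) <=
  contract_rank C X + contract_rank C Y.
Proof.
rewrite /contract_rank.
have := rank_submod HM (X :|: C) (Y :|: C).
rewrite setUACA setUid -setUIl.
have := rank_mono M (subsetUr (X :&: Y) C); have := rank_mono M (subsetUr (X :|: Y) C).
by have := rank_mono M (subsetUr X C); have := rank_mono M (subsetUr Y C); lia.
Qed.

Lemma minorE C D : minor_data M C D ->
  minor M C D = matroid_of_rank (contract_rank C) (ground M :\: (C :|: D)).
Proof.
case=> sCE sDE dCD.
have eE : ground M :\: (C :|: D) :|: C = ground M :\: D.
  apply/setP=> z; rewrite !inE; case zC: (z \in C); last by rewrite orbF.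
  by rewrite (disjointFr dCD zC) (subsetP sCE).
congr SetSys; apply/setP=> B; rewrite !inE /contract_rank eE.
case: (B \subset _) => //=.
have := rank_mono M (subsetUr B C).
have : rank M C <= rank M (ground M :\: D) by rewrite -eE rank_mono ?subsetUr.
by move=> h1 h2; congr andb; apply/eqP/eqP; lia.
Qed.

Lemma minor_matroid C D : minor_data M C D -> is_matroid (minor M C D).
Proof.
move/minorE->; apply: is_matroid_of_rank.
- exact: contract_rank_le_card.
- exact: contract_rank_mono.
- exact: contract_rank_submod.
Qed.

Lemma minor_rank C D X : minor_data M C D -> X \subset ground M :\: (C :|: D) ->
  rank (minor M C D) X = contract_rank C X.
Proof.
move/minorE->; apply: rank_matroid_of_rank.
- exact: contract_rank_le_card.
- exact: contract_rank_mono.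
- exact: contract_rank_submod.
Qed.
End Contraction.

Lemma minor_dataU (T : finType) (M : setsys T) C D C' D' :
  minor_data M C D -> minor_data (minor M C D) C' D' ->
  minor_data M (C :|: C') (D :|: D').
Proof.
case=> sC sD dCD [/= sC' sD' dCD'].
have sE : ground M :\: (C :|: D) \subset ground M := subsetDl _ _.
split; rewrite ?subUset ?sC ?sD ?(subset_trans sC') ?(subset_trans sD') //.
rewrite -setI_eq0; apply/set0Pn => -[z]; rewrite !inE => /andP[/orP[zC|zC'] /orP[zD|zD']].
- by rewrite (disjointFr dCD zC) in zD.
- by move: (subsetP sD' z zD'); rewrite !inE zC.
- by move: (subsetP sC' z zC'); rewrite !inE zD orbT.
- by rewrite (disjointFr dCD' zC') in zD'.
Qed.

Lemma minor_minor (T : finType) (M : setsys T) C D C' D' : is_matroid M ->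
  minor_data M C D -> minor_data (minor M C D) C' D' ->
  minor (minor M C D) C' D' = minor M (C :|: C') (D :|: D').
Proof.
move=> HM HD HD'; have [/= sC' _ _] := HD'.
rewrite (minorE HD') (minorE (minor_dataU HD HD')) /=.
rewrite setDDl setUACA; apply: eq_matroid_of_rank => X sX.
have sXE : X \subset ground M :\: (C :|: D).
  by apply: subset_trans sX (setDS _ _); rewrite -setUACA subsetUl.
rewrite /contract_rank !(minor_rank HM HD) ?subUset ?sXE // /contract_rank.
rewrite -setUA (setUC C' C).
have := rank_mono M (subsetUl C C'); have := rank_mono M (subsetUr X (C :|: C')).
by lia.
Qed.

Lemma has_minor_iso_minor (T : finType) (M : setsys T) C D :
  minor_data M C D -> has_minor_iso M (minor M C D).
Proof.
by exists C, D; split=> //; exists id; split=> [x y _ _ //||Z _]; rewrite imset_id.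
Qed.

Lemma minimal_excluded_minor (P : partial_field) (T : finType) (M : setsys T) C D :
  is_matroid M -> minor_data M C D -> C :|: D != set0 ->
  ~ representable P (minor M C D) ->
  exists C' D', [/\ minor_data M C' D', C' :|: D' != set0 & excluded_minor P (minor M C' D')].
Proof.
move=> HM; move En: #|ground M :\: (C :|: D)| => n.
elim/ltn_ind: n C D En => n IHn C D En HD CD0 nrep.
have [[C' [D' [HD' CD0' nrep']]]|none] := classic (exists C' D',
  [/\ minor_data (minor M C D) C' D', C' :|: D' != set0 &
       ~ representable P (minor (minor M C D) C' D')]); last first.
  exists C, D; split=> //; split=> [||C' D' HD' CD0'] //; first exact: minor_matroid.
  by apply: NNPP => nrep'; apply: none; exists C', D'.
have [/= sC' sD' _] := HD'.
rewrite minor_minor // in nrep'.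
apply: (IHn _ _ (C :|: C') (D :|: D') erefl (minor_dataU HD HD')) nrep'.
  rewrite -En -setUACA -setDDl; apply: proper_card; rewrite properE subsetDl /=.
  case/set0Pn: CD0' => z zCD'; apply/subsetPn; exists z; last by rewrite inE zCD'.
  by move: zCD'; rewrite inE => /orP[/(subsetP sC')|/(subsetP sD')].
by rewrite -setUACA setU_eq0 negb_and CD0' orbT.
Qed.

Import GRing.Theory Num.Theory.
Local Open Scope ring_scope.

Section PartialFieldHom.
Variables (P Q : partial_field) (D : pf_ring P -> Prop) (phi : pf_ring P -> pf_ring Q).
Hypothesis hom1 : D 1 /\ phi 1 = 1.
Hypothesis homB : forall x y, D x -> D y -> D (x - y) /\ phi (x - y) = phi x - phi y.
Hypothesis homM : forall x y, D x -> D y -> D (x * y) /\ phi (x * y) = phi x * phi y.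
Hypothesis hom_group : forall x, @pf_group P x -> D x /\ @pf_group Q (phi x).
Hypothesis group_neq0 : forall y, @pf_group Q y -> y != 0.

Lemma hom0 : D 0 /\ phi 0 = 0.
Proof. by have [D1 _] := hom1; have := homB D1 D1; rewrite !subrr. Qed.

Lemma homD x y : D x -> D y -> D (x + y) /\ phi (x + y) = phi x + phi y.
Proof.
move=> Dx Dy; have [D0 e0] := hom0; have [D0y e0y] := homB D0 Dy.
by have := homB Dx D0y; rewrite e0y e0 !sub0r !opprK.
Qed.

Lemma hom_det n (A : 'M_n) : (forall i j, D (A i j)) ->
  D (\det A) /\ phi (\det A) = \det (map_mx phi A).
Proof.
move=> DA; have [D1 e1] := hom1; have [D0 e0] := hom0.
have hom_m1 : D (-1) /\ phi (-1) = -1 by have := homB D0 D1; rewrite e0 e1 !sub0r.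
rewrite /determinant; apply: (big_ind2 (fun x y => D x /\ phi x = y)) => //.
  by move=> x1 _ x2 _ [Dx1 <-] [Dx2 <-]; apply: homD.
move=> s _.
have [Ds es] : D ((-1) ^+ odd_perm s) /\ phi ((-1) ^+ odd_perm s) = (-1) ^+ odd_perm s.
  by case: (odd_perm s); rewrite ?expr1 ?expr0.
have [Dp ep] : D (\prod_i A i (s i)) /\ phi (\prod_i A i (s i)) = \prod_i map_mx phi A i (s i).
  apply: (big_ind2 (fun x y => D x /\ phi x = y)) => // [x1 _ x2 _ [Dx1 <-] [Dx2 <-]|i _].
    exact: homM.
  by rewrite mxE.
by have := homM Ds Dp; rewrite es ep.
Qed.

Lemma hom_subdet (X Y : finType) (A : X -> Y -> pf_ring P) r c :
  (forall x y, D (A x y)) ->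
  D (subdet A r c) /\ phi (subdet A r c) = subdet (fun x y => phi (A x y)) r c.
Proof.
move=> DA; have [D0 e0] := hom0; rewrite /subdet.
set B := \matrix_(i, j) _.
have DB i j : D (B i j).
  rewrite mxE; case: (nth None [seq Some x | x <- enum r] i) => [x|] //.
  by case: (nth None [seq Some y | y <- enum c] j).
have [DdetB ->] := hom_det DB.
split=> //; congr (\det _); apply/matrixP=> i j; rewrite !mxE.
case: (nth None [seq Some x | x <- enum r] i) => [x|] //.
by case: (nth None [seq Some y | y <- enum c] j).
Qed.

Lemma representable_hom (T : finType) (M : setsys T) :
  representable P M -> representable Q M.
Proof.
case=> X [Y [A [[A_entries A_subdets] isoM]]].
have DA x y : D (A x y).
  by case: (A_entries x y) => [->|/hom_group[]//]; case: hom0.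
pose A' x y := phi (A x y).
have subdet_neq0 (r : {set X}) (c : {set Y}) :
    #|r| = #|c| -> (subdet A' r c != 0) = (subdet A r c != 0).
  move=> rc; have [_ <-] := hom_subdet r c DA.
  have [->|nz] := eqVneq (subdet A r c) 0; first by case: hom0 => _ ->; rewrite eqxx.
  by have [_ /group_neq0] := hom_group (A_subdets r c rc nz).
exists X, Y, A'; split; first split.
- move=> x y; rewrite /A'; case: (A_entries x y) => [->|/hom_group[_ gy]]; last by right.
  by left; case: hom0.
- move=> r c rc; rewrite subdet_neq0 // => nz; have [_ <-] := hom_subdet r c DA.
  exact: (hom_group (A_subdets r c rc nz)).2.
suff -> : matroid_of_matrix A' = matroid_of_matrix A by [].
congr SetSys; apply/setP => B; rewrite !inE; apply: eq_existsb => Z.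
by case: eqP => //= _; case: eqP => //= rc; rewrite subdet_neq0.
Qed.
End PartialFieldHom.

Section GeneratedGroup.
Variables (F : fieldType) (gs : seq F).

Lemma gen_group_nth k : (k < size gs)%N -> gen_group gs gs`_k.
Proof.
move=> ltk; exists (mkseq (fun j => (j == k)%:Z) (size gs)); rewrite size_mkseq.
split=> //; rewrite (bigD1 (Ordinal ltk)) //= big1 => [|j /negPf jk].
  by rewrite nth_mkseq // eqxx expr1z mulr1.
by rewrite nth_mkseq // (_ : (j == k :> nat) = false) ?expr0z // -jk.
Qed.

Lemma gen_group1 : gen_group gs 1.
Proof.
exists (nseq (size gs) 0); rewrite size_nseq; split=> //.
by rewrite big1 // => j _; rewrite nth_nseq ltn_ord expr0z.
Qed.

Lemma gen_groupV x : gen_group gs x -> gen_group gs x^-1.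
Proof.
case=> es [size_es ->]; exists (mkseq (fun j => - es`_j) (size gs)).
rewrite size_mkseq -prodfV; split=> //.
by apply: eq_bigr => j _; rewrite nth_mkseq // invr_expz.
Qed.

Lemma gen_group_ind (Pr : F -> Prop) :
  Pr 1 -> (forall x y, Pr x -> Pr y -> Pr (x * y)) ->
  (forall k z, (k < size gs)%N -> Pr (gs`_k ^ z)) ->
  forall x, gen_group gs x -> Pr x.
Proof. by move=> Pr1 PrM Prgen x [es [_ ->]]; apply: big_ind => // j _; apply: Prgen. Qed.

Hypothesis gs_neq0 : forall k, (k < size gs)%N -> gs`_k != 0.

Lemma gen_groupM x y : gen_group gs x -> gen_group gs y -> gen_group gs (x * y).
Proof.
case=> es1 [_ ->] [es2 [_ ->]]; exists (mkseq (fun j => es1`_j + es2`_j) (size gs)).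
rewrite size_mkseq -big_split; split=> //; apply: eq_bigr => j _.
by rewrite nth_mkseq // expfzDr ?gs_neq0.
Qed.

Lemma gen_group_neq0 x : gen_group gs x -> x != 0.
Proof.
move=> gx; apply: (@gen_group_ind (fun x => x != 0) _ _ _ x gx) => [|a b|k z ltk].
- exact: oner_neq0.
- exact: mulf_neq0.
- by rewrite expfz_neq0 ?gs_neq0.
Qed.
End GeneratedGroup.

Section Localization.
Variables (R : comNzRingType) (K L : fieldType).
Variables (iota : {rmorphism R -> K}) (ev : {rmorphism R -> L}).
Hypothesis ker_iota_ev : forall p, iota p = 0 -> ev p = 0.

(* The partial map iota p / iota q |-> ev p / ev q, defined where ev q != 0;
   it is well defined because ker iota is contained in ker ev. *)
Definition loc_dom (x : K) := exists p q, ev q != 0 /\ x = iota p / iota q.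

Definition loc_map (x : K) : L :=
  let pq := epsilon (inhabits (0, 1))
              (fun pq : R * R => ev pq.2 != 0 /\ x = iota pq.1 / iota pq.2) in
  ev pq.1 / ev pq.2.

Definition loc_rel x y := loc_dom x /\ loc_map x = y.

Lemma iota_neq0 q : ev q != 0 -> iota q != 0.
Proof. by apply: contraNneq => /ker_iota_ev ->. Qed.

Lemma loc_mapE p q : ev q != 0 -> loc_map (iota p / iota q) = ev p / ev q.
Proof.
move=> evq; rewrite /loc_map.
have := epsilon_spec (inhabits (0, 1))
  (fun pq : R * R => ev pq.2 != 0 /\ iota p / iota q = iota pq.1 / iota pq.2)
  (ex_intro _ (p, q) (conj evq erefl)).
case: (epsilon _ _) => p' q' /= [evq' e].
have [iq iq'] := (iota_neq0 evq, iota_neq0 evq').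
move/eqP: e; rewrite eqr_div // -!rmorphM => /eqP e.
have : iota (p * q' - p' * q) = 0 by rewrite rmorphB e subrr.
move/ker_iota_ev/eqP; rewrite rmorphB !rmorphM subr_eq0 => e'.
by apply/eqP; rewrite eqr_div // eq_sym.
Qed.

Lemma loc_rel_frac p q : ev q != 0 -> loc_rel (iota p / iota q) (ev p / ev q).
Proof. by move=> evq; split; [exists p, q | rewrite loc_mapE]. Qed.

Lemma loc_relP x y : loc_rel x y ->
  exists p q, [/\ ev q != 0, x = iota p / iota q & y = ev p / ev q].
Proof. by case=> -[p [q [evq ->]]] <-; exists p, q; rewrite loc_mapE. Qed.

Lemma loc_rel_iota p : loc_rel (iota p) (ev p).
Proof. by have := @loc_rel_frac p 1; rewrite !rmorph1 !divr1; apply; apply: oner_neq0. Qed.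

Lemma loc_rel1 : loc_rel 1 1.
Proof. by have := loc_rel_iota 1; rewrite !rmorph1. Qed.

Lemma loc_relB x1 y1 x2 y2 : loc_rel x1 y1 -> loc_rel x2 y2 -> loc_rel (x1 - x2) (y1 - y2).
Proof.
move=> /loc_relP[p1 [q1 [h1 -> ->]]] /loc_relP[p2 [q2 [h2 -> ->]]].
have h12 : ev (q1 * q2) != 0 by rewrite rmorphM mulf_neq0.
have := loc_rel_frac (p1 * q2 - p2 * q1) h12; rewrite !(rmorphB, rmorphM).
have [i1 i2] := (iota_neq0 h1, iota_neq0 h2).
congr loc_rel; field; rewrite ?i1 ?i2 ?h1 ?h2 //.
Qed.

Lemma loc_relM x1 y1 x2 y2 : loc_rel x1 y1 -> loc_rel x2 y2 -> loc_rel (x1 * x2) (y1 * y2).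
Proof.
move=> /loc_relP[p1 [q1 [h1 -> ->]]] /loc_relP[p2 [q2 [h2 -> ->]]].
have h12 : ev (q1 * q2) != 0 by rewrite rmorphM mulf_neq0.
by have := loc_rel_frac (p1 * p2) h12; rewrite !rmorphM !mulf_div.
Qed.

Lemma loc_relV x y : loc_rel x y -> y != 0 -> loc_rel x^-1 y^-1.
Proof.
move=> /loc_relP[p [q [evq -> ->]]] nz.
have evp : ev p != 0 by apply: contraNneq nz => ->; rewrite mul0r.
by have := loc_rel_frac q evp; rewrite !invf_div.
Qed.

Lemma representable_loc (G : L -> Prop) (ps : seq R) (gs : seq K)
    (T : finType) (M : setsys T) :
  G 1 -> (forall a b, G a -> G b -> G (a * b)) -> (forall a, G a -> G a^-1) ->
  (forall a, G a -> a != 0) ->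
  gs = map iota ps -> (forall k, (k < size ps)%N -> G (map ev ps)`_k) ->
  representable (@PartialField K (gen_group gs)) M -> representable (@PartialField L G) M.
Proof.
move=> G1 GM GV G0 -> Gps; pose good x := exists2 y, loc_rel x y & G y.
have goodM x1 x2 : good x1 -> good x2 -> good (x1 * x2).
  by case=> y1 r1 g1 [y2 r2 g2]; exists (y1 * y2); [apply: loc_relM | apply: GM].
have goodV x : good x -> good x^-1.
  by case=> y r g; exists y^-1; [apply: loc_relV => //; apply: G0 | apply: GV].
have good1 : good 1 by exists 1; first exact: loc_rel1.
have goodX x n : good x -> good (x ^+ n).
  by move=> gx; elim: n => [|n IHn]; rewrite ?expr0 ?exprS //; apply: goodM.
apply: (@representable_hom (@PartialField K (gen_group (map iota ps))) (@PartialField L G)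
  loc_dom loc_map).
- exact: loc_rel1.
- by move=> x y Dx Dy; apply: loc_relB.
- by move=> x y Dx Dy; apply: loc_relM.
- move=> x gx; suff [y [Dx <-]] : good x by [].
  apply: (gen_group_ind _ _ _ gx) => // k z; rewrite size_map => ltk.
  have gk : good (map iota ps)`_k.
    rewrite (nth_map 0) //; exists (ev ps`_k); first exact: loc_rel_iota.
    by rewrite -(nth_map 0 0) //; apply: Gps.
  by case: z => n; [rewrite -exprnP | apply: goodV]; apply: goodX.
- exact: G0.
Qed.

Lemma representable_loc_gen (gsL : seq L) (ps : seq R) (gs : seq K)
    (T : finType) (M : setsys T) :
  (forall k, (k < size gsL)%N -> gsL`_k != 0) ->
  gs = map iota ps -> (forall k, (k < size ps)%N -> gen_group gsL (map ev ps)`_k) ->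
  representable (@PartialField K (gen_group gs)) M ->
  representable (@PartialField L (gen_group gsL)) M.
Proof.
move=> gsL_neq0; apply: representable_loc.
- exact: gen_group1.
- exact: gen_groupM.
- exact: gen_groupV.
- exact: gen_group_neq0.
Qed.
End Localization.

Definition gauss_iota : {rmorphism {poly int} -> algC} := horner_eval 'i \o map_poly intr.
Definition gauss_ev : {rmorphism {poly int} -> 'F_5} := horner_eval 2 \o map_poly intr.

Lemma size2_polyE (S : nzRingType) (p : {poly S}) : (size p <= 2)%N ->
  p = (p`_0)%:P + (p`_1)%:P * 'X.
Proof.
move=> sp; apply/polyP => -[|[|k]]; rewrite coefD coefC coefMX coefC /=.
- by rewrite addr0.
- by rewrite add0r.
- by rewrite addr0 nth_default // (leq_trans sp).
Qed.

(* Reduce modulo the monic polynomial X^2 + 1, which both maps kill; the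
   remainder r0 + r1 X vanishes at i only if r0 = r1 = 0. *)
Lemma gauss_ker p : gauss_iota p = 0 -> gauss_ev p = 0.
Proof.
have d_monic : 'X^2 + 1 \is monic := monicXnaddC (1 : int) (isT : 0 < 2)%N.
have mod_d (S : comNzRingType) (f : {rmorphism {poly int} -> S}) :
    f ('X^2 + 1) = 0 -> f p = f (p %% ('X^2 + 1)).
  move=> fd; rewrite {1}(Pdiv.IdomainMonic.divp_eq d_monic p).
  by rewrite rmorphD rmorphM fd mulr0 add0r.
have size_r : (size (p %% ('X^2 + 1))%R <= 2)%N.
  have size_d : size ('X^2 + 1 : {poly int}) = 3%N.
    by rewrite size_polyDl ?size_polyXn ?size_polyC.
  by rewrite -ltnS -size_d ltn_modp monic_neq0.
rewrite (mod_d _ gauss_iota) ?(mod_d _ gauss_ev); first last.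
- by rewrite /= horner_evalE rmorphD rmorphXn rmorph1 /= map_polyX !hornerE sqrCi addNr.
- by rewrite /= horner_evalE rmorphD rmorphXn rmorph1 /= map_polyX !hornerE; apply/eqP.
move: (p %% _) size_r => r /size2_polyE ->.
rewrite /= !horner_evalE !rmorphD !rmorphM /= !map_polyX !map_polyC !hornerE /=.
rewrite [_ * 'i]mulrC => e.
have /eqP r0 : r`_0 == 0.
  by rewrite -(intr_eq0 algC) -(Re_rect (realz _ _) (realz _ r`_1)) e raddf0.
have /eqP r1 : r`_1 == 0.
  by rewrite -(intr_eq0 algC) -(Im_rect (realz _ r`_0) (realz _ _)) e raddf0.
by rewrite r0 r1 !mul0r addr0.
Qed.

Definition gens2 (R : nzRingType) (x : R) := [:: x; 1 - x].
Definition gens3 (R : nzRingType) (a : R) := [:: -1; a; 1 - a; a ^+ 2 - a + 1].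
Definition gens4 (R : nzRingType) (a b : R) :=
  [:: -1; a; b; a - 1; b - 1; a * b - 1; a + b - 2 * a * b].
Definition gens5 (R : nzRingType) (a b c : R) :=
  [:: -1; a; b; c; a - 1; b - 1; c - 1; a - c; c - a * b; (1 - c) - (1 - a) * b].

Section MapGenerators.
Variables (R S : nzRingType) (f : {rmorphism R -> S}).

Lemma map_gens2 x : map f (gens2 x) = gens2 (f x).
Proof. by rewrite /= rmorphB rmorph1. Qed.

Lemma map_gens3 a : map f (gens3 a) = gens3 (f a).
Proof. by rewrite /= !(rmorphN1, rmorphB, rmorphD, rmorphXn, rmorph1). Qed.

Lemma map_gens4 a b : map f (gens4 a b) = gens4 (f a) (f b).
Proof. by rewrite /= !(rmorphN1, rmorphB, rmorphD, rmorphM, rmorph_nat, rmorph1). Qed.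

Lemma map_gens5 a b c : map f (gens5 a b c) = gens5 (f a) (f b) (f c).
Proof. by rewrite /= !(rmorphN1, rmorphB, rmorphM, rmorph1). Qed.
End MapGenerators.

Lemma tofrac_ker (R : idomainType) (L : nzRingType) (f : {rmorphism R -> L}) p :
  tofrac p = 0 -> f p = 0.
Proof. by move/eqP; rewrite tofrac_eq0 => /eqP ->; rewrite rmorph0. Qed.

Lemma tofrac_neq0 (R : idomainType) (L : nzRingType) (f : {rmorphism R -> L}) p :
  f p != 0 -> tofrac p != 0.
Proof. by rewrite tofrac_eq0; apply: contraNneq => ->; rewrite rmorph0. Qed.

Lemma gens2_neq0 k : (k < size (gens2 ('i : algC)))%N -> (gens2 ('i : algC))`_k != 0.
Proof.
have i_neq1 : 'i != 1 :> algC.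
  apply/eqP => i1; have /eqP := sqrCi algC; rewrite i1 expr1n -addr_eq0.
  by rewrite (_ : 1 + 1 = 2%:R) // pnatr_eq0.
by case: k => [|[|//]] _; rewrite /= ?neq0Ci // subr_eq0 eq_sym.
Qed.

Lemma gens3_neq0 k : (k < size (gens3 a1))%N -> (gens3 a1)`_k != 0.
Proof.
move=> ltk; rewrite -[a1]/(tofrac 'X) -map_gens3 (nth_map 0) //.
apply: (tofrac_neq0 (f := horner_eval (2 : rat))); rewrite -(nth_map 0 0) // map_gens3.
by rewrite /= horner_evalE hornerX; move: ltk; case: k => [|[|[|[|//]]]].
Qed.

Lemma gens4_neq0 k : (k < size (gens4 a2 b2))%N -> (gens4 a2 b2)`_k != 0.
Proof.
move=> ltk; rewrite -[a2]/(tofrac 'X%:P) -[b2]/(tofrac 'X) -map_gens4 (nth_map 0) //.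
pose f : {rmorphism {poly {poly rat}} -> rat} := horner_eval 3 \o map_poly (horner_eval 2).
have fa : f 'X%:P = 2 by rewrite /= horner_evalE map_polyC hornerC /= horner_evalE hornerX.
have fb : f 'X = 3 by rewrite /= horner_evalE map_polyX hornerX.
apply: (tofrac_neq0 (f := f)); rewrite -(nth_map 0 0) // map_gens4 fa fb.
by move: ltk; case: k => [|[|[|[|[|[|[|//]]]]]]].
Qed.

Lemma gens3_in_gens2 k : (k < size (gens3 ('i : algC)))%N ->
  gen_group (gens2 'i) (gens3 ('i : algC))`_k.
Proof.
have gen j : (j < 2)%N -> gen_group (gens2 ('i : algC)) (gens2 ('i : algC))`_j :=
  @gen_group_nth _ (gens2 'i) j.
case: k => [|[|[|[|//]]]] _ /=.
- by rewrite -(sqrCi algC) expr2; apply: (gen_groupM gens2_neq0 (gen 0%N _) (gen 0%N _)).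
- exact: (gen 0%N).
- exact: (gen 1%N).
- rewrite sqrCi (_ : -1 - 'i + 1 = 'i^-1); last by rewrite invCi; ring.
  exact: gen_groupV (gen 0%N isT).
Qed.

Section GeneratorImages.
Variable K : fieldType.

Lemma gens4_in_gens3 (a : K) :
  (forall k, (k < size (gens3 a))%N -> (gens3 a)`_k != 0) ->
  forall k, (k < size (gens4 a (a / (a - 1))))%N ->
    gen_group (gens3 a) (gens4 a (a / (a - 1)))`_k.
Proof.
move=> gs_neq0; have gen k : (k < 4)%N -> gen_group (gens3 a) (gens3 a)`_k :=
  @gen_group_nth _ (gens3 a) k.
have gM := gen_groupM gs_neq0; have gV := @gen_groupV _ (gens3 a).
have oma : 1 - a != 0 := gs_neq0 2%N isT.
have am1 : a - 1 != 0 by rewrite -opprB oppr_eq0.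
case=> [|[|[|[|[|[|[|//]]]]]]] _ /=.
- exact: (gen 0%N).
- exact: (gen 1%N).
- rewrite (_ : _ / _ = -1 * a * (1 - a)^-1); last by field; rewrite oma am1.
  by apply: (gM); [apply: (gM); [apply: (gen 0%N) | apply: (gen 1%N)] | apply/gV/(gen 2%N)].
- rewrite (_ : _ - 1 = -1 * (1 - a)); last by ring.
  by apply: (gM); [apply: (gen 0%N) | apply: (gen 2%N)].
- rewrite (_ : _ - 1 = -1 * (1 - a)^-1); last by field; rewrite oma am1.
  by apply: (gM); [apply: (gen 0%N) | apply/gV/(gen 2%N)].
- rewrite (_ : _ - 1 = -1 * (a ^+ 2 - a + 1) * (1 - a)^-1); last by field; rewrite oma am1.
  by apply: (gM); [apply: (gM); [apply: (gen 0%N) | apply: (gen 3%N)] | apply/gV/(gen 2%N)].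
- rewrite (_ : _ - _ = a * a * (1 - a)^-1); last by field; rewrite oma am1.
  by apply: (gM); [apply: (gM); apply: (gen 1%N) | apply/gV/(gen 2%N)].
Qed.

Lemma gens5_in_gens4 (a b : K) :
  (forall k, (k < size (gens4 a b))%N -> (gens4 a b)`_k != 0) ->
  forall k, (k < size (gens5 a^-1 b b))%N -> gen_group (gens4 a b) (gens5 a^-1 b b)`_k.
Proof.
move=> gs_neq0; have gen k : (k < 7)%N -> gen_group (gens4 a b) (gens4 a b)`_k :=
  @gen_group_nth _ (gens4 a b) k.
have gM := gen_groupM gs_neq0; have gV := @gen_groupV _ (gens4 a b).
have a_neq0 : a != 0 := gs_neq0 1%N isT.
case=> [|[|[|[|[|[|[|[|[|[|//]]]]]]]]]] _ /=.
- exact: (gen 0%N).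
- exact/gV/(gen 1%N).
- exact: (gen 2%N).
- exact: (gen 2%N).
- rewrite (_ : _ - 1 = -1 * (a - 1) * a^-1); last by field.
  by apply: (gM); [apply: (gM); [apply: (gen 0%N) | apply: (gen 3%N)] | apply/gV/(gen 1%N)].
- exact: (gen 4%N).
- exact: (gen 4%N).
- rewrite (_ : _ - _ = -1 * (a * b - 1) * a^-1); last by field.
  by apply: (gM); [apply: (gM); [apply: (gen 0%N) | apply: (gen 5%N)] | apply/gV/(gen 1%N)].
- rewrite (_ : _ - _ = b * (a - 1) * a^-1); last by field.
  by apply: (gM); [apply: (gM); [apply: (gen 2%N) | apply: (gen 3%N)] | apply/gV/(gen 1%N)].
- rewrite (_ : _ - _ = (a + b - 2 * a * b) * a^-1); last by field.
  by apply: (gM); [apply: (gen 6%N) | apply/gV/(gen 1%N)].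
Qed.
End GeneratorImages.

Lemma representable_H1_of_H2 (T : finType) (M : setsys T) :
  representable H2 M -> representable H1 M.
Proof.
have iotaX : gauss_iota 'X = 'i by rewrite /= horner_evalE map_polyX hornerX.
have evX : gauss_ev 'X = 2 by rewrite /= horner_evalE map_polyX hornerX.
apply: (representable_loc gauss_ker (ps := gens2 'X)) => //.
- exact: mulf_neq0.
- by move=> a; rewrite invr_eq0.
- by rewrite map_gens2 iotaX.
- by rewrite map_gens2 evX; case=> [|[|//]].
Qed.

Lemma representable_H2_of_H3 (T : finType) (M : setsys T) :
  representable H3 M -> representable H2 M.
Proof.
pose ev : {rmorphism {poly rat} -> algC} := horner_eval 'i \o map_poly ratr.
have evX : ev 'X = 'i by rewrite /= horner_evalE map_polyX hornerX.
apply: (representable_loc_gen (@tofrac_ker _ _ ev) gens2_neq0 (ps := gens3 'X)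
  (gs := gens3 a1)); first by rewrite map_gens3.
by rewrite map_gens3 evX; apply: gens3_in_gens2.
Qed.

Lemma representable_H3_of_H4 (T : finType) (M : setsys T) :
  representable H4 M -> representable H3 M.
Proof.
pose ev : {rmorphism {poly {poly rat}} -> Q1} :=
  horner_eval (a1 / (a1 - 1)) \o map_poly (@tofrac {poly rat}).
have evA : ev 'X%:P = a1 by rewrite /= horner_evalE map_polyC hornerC.
have evB : ev 'X = a1 / (a1 - 1) by rewrite /= horner_evalE map_polyX hornerX.
apply: (representable_loc_gen (@tofrac_ker _ _ ev) gens3_neq0 (ps := gens4 'X%:P 'X)
  (gs := gens4 a2 b2)); first by rewrite map_gens4.
by rewrite map_gens4 evA evB; apply: gens4_in_gens3 gens3_neq0.
Qed.

Lemma representable_H4_of_H5 (T : finType) (M : setsys T) :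
  representable H5 M -> representable H4 M.
Proof.
pose f0 : {rmorphism rat -> Q2} := @tofrac _ \o polyC \o polyC.
pose f1 : {rmorphism {poly rat} -> Q2} := horner_eval a2^-1 \o map_poly f0.
pose f2 : {rmorphism {poly {poly rat}} -> Q2} := horner_eval b2 \o map_poly f1.
pose ev : {rmorphism {poly {poly {poly rat}}} -> Q2} := horner_eval b2 \o map_poly f2.
have evA : ev 'X%:P%:P = a2^-1.
  rewrite /= horner_evalE map_polyC hornerC /= horner_evalE map_polyC hornerC /=.
  by rewrite horner_evalE map_polyX hornerX.
have evB : ev 'X%:P = b2.
  by rewrite /= horner_evalE map_polyC hornerC /= horner_evalE map_polyX hornerX.
have evC : ev 'X = b2 by rewrite /= horner_evalE map_polyX hornerX.
apply: (representable_loc_gen (@tofrac_ker _ _ ev) gens4_neq0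
  (ps := gens5 'X%:P%:P 'X%:P 'X) (gs := gens5 a3 b3 c3)); first by rewrite map_gens5.
by rewrite map_gens5 evA evB evC; apply: gens5_in_gens4 gens4_neq0.
Qed.

Lemma representable_Hydra_pred (i : nat) (T : finType) (M : setsys T) : (1 <= i <= 4)%N ->
  representable (Hydra i.+1) M -> representable (Hydra i) M.
Proof.
case: i => [|[|[|[|[|i]]]]] //= _.
- exact: representable_H1_of_H2.
- exact: representable_H2_of_H3.
- exact: representable_H3_of_H4.
- exact: representable_H4_of_H5.
Qed.

Theorem lemma5p1 (i : nat) (T : finType) (M : setsys T) :
  (1 <= i <= 4)%N ->
  excluded_minor (Hydra i) M ->
  (exists (T' : finType) (N : setsys T'), in_N i N /\ has_minor_iso M N)
  \/ excluded_minor (Hydra i.+1) M.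
Proof.
move=> hi [HM nrepM rep_minors].
have nrepM' : ~ representable (Hydra i.+1) M by move/(representable_Hydra_pred hi).
case: (classic (exists C D, [/\ minor_data M C D, C :|: D != set0 &
                                ~ representable (Hydra i.+1) (minor M C D)])).
  case=> C [D [HD CD0 nrep]]; left.
  have [C' [D' [HD' CD0' excl]]] := minimal_excluded_minor HM HD CD0 nrep.
  exists T, (minor M C' D'); split; last exact: has_minor_iso_minor.
  by split; last exact: rep_minors.
move=> none; right; split=> // C D HD CD0.
by apply: NNPP => nrep; apply: none; exists C, D.
Qed.
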